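(* Let $(\mathbf Y_i)_{i\in\mathbb N}$ be a $p$-dimensional stationary time series on a probability space on which, for each $m\in\mathbb N$, $\mathbf W_{1,m},\mathbf W_{2,m}$ are independent $p$-dimensional standard Brownian motions, such that the long-run covariance matrix $\Sigma=\mathrm{Cov}(\mathbf Y_1,\mathbf Y_1)+\sum_{i\ge2}\{\mathrm{Cov}(\mathbf Y_1,\mathbf Y_i)+\mathrm{Cov}(\mathbf Y_i,\mathbf Y_1)\}$ exists and is positive definite, and for some $0<\xi<\frac12$, $$\sup_{k>m}\frac{1}{(k-m)^\xi}\Big\|\sum_{i=m+1}^k\{\mathbf Y_i-\mathbb E(\mathbf Y_1)\}-\Sigma^{1/2}\mathbf W_{1,m}(k-m)\Big\|_2=O_{\mathbb P}(1),\quad\frac{1}{m^\xi}\Big\|\sum_{i=1}^m\{\mathbf Y_i-\mathbb E(\mathbf Y_1)\}-\Sigma^{1/2}\mathbf W_{2,m}(m)\Big\|_2=O_{\mathbb P}(1).$$ For $k\ge m+1$ define $$\tilde D_m(k)=\max_{j\in\{m,\dots,k-1\}}\frac{j(k-j)}{m^{3/2}}\|\bar{\mathbf Y}_{1:j}-\bar{\mathbf Y}_{j+1:k}\|_{\Sigma^{-1}},$$ $$\bar D_m(k)=\frac{1}{\sqrt m}\max_{j\in\{m,\dots,k-1\}}\Big\|\tfrac km\Sigma^{1/2}\{\mathbf W_{2,m}(m)+\mathbf W_{1,m}(j-m)\}-\tfrac jm\Sigma^{1/2}\{\mathbf W_{2,m}(m)+\mathbf W_{1,m}(k-m)\}\Big\|_{\Sigma^{-1}}.$$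 Then for any $\eta>0$, $\sup_{k>m}(m/k)^{\frac32+\eta}|\tilde D_m(k)-\bar D_m(k)|=o_{\mathbb P}(1)$ as $m\to\infty$.
   Context: $\bar{\mathbf Y}_{j:k}=\frac1{k-j+1}\sum_{i=j}^k\mathbf Y_i$. For $M$ positive definite, $\|\mathbf y\|_M=\sqrt{(\mathbf y^\top M\mathbf y)/p}$; $\|\cdot\|_2$ is the Euclidean norm; $\Sigma^{1/2}$ is the symmetric positive-definite square root. *)

From HB Require Import structures.
From mathcomp Require Import all_boot all_order all_algebra.
From mathcomp Require Import all_classical all_reals all_analysis.
From Stdlib Require List.
Set Implicit Arguments.
Unset Strict Implicit.
Unset Printing Implicit Defensive.
Import Order.TTheory GRing.Theory Num.Theory.
Import numFieldTopology.Exports.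
Local Open Scope classical_set_scope.
Local Open Scope ring_scope.

Section LinAlg.
Context {R : realType} {p : nat}.

Definition colv (f : 'I_p -> R) : 'cV[R]_p := \col_c f c.

Definition norm2 (v : 'cV[R]_p) : R := Num.sqrt (\sum_c (v c 0) ^+ 2).

Definition Mnorm (M : 'M[R]_p) (v : 'cV[R]_p) : R :=
  Num.sqrt (((v^T *m M *m v) 0 0) / p%:R).

Definition posdef (M : 'M[R]_p) : Prop :=
  M^T = M /\ forall v : 'cV[R]_p, v != 0 -> 0 < (v^T *m M *m v) 0 0.

Definition is_sqrt_pd (M S : 'M[R]_p) : Prop := posdef S /\ S *m S = M.

End LinAlg.

Section Prob.
Context {R : realType} {d : measure_display} {T : measurableType d}
  (P : probability T R).

Definition bigI (I : Type) (s : seq I) (F : I -> set T) : set T :=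
  \big[setI/setT]_(i <- s) F i.

Definition indep_rvs (I : eqType) (adm : I -> Prop) (X : I -> T -> R) : Prop :=
  forall (s : seq I), uniq s -> (forall i, i \in s -> adm i) ->
  forall (B : I -> set R), (forall i, measurable (B i)) ->
  P (bigI s (fun i => X i @^-1` B i)) =
  (\prod_(i <- s) P (X i @^-1` B i))%E.

(* mutual independence of families (groups) of real random variables:
   the product rule for events determined by finitely many variables of each
   group (measurable rectangles, which generate the sigma-algebras) *)
Definition indep_families (J : eqType) (I : J -> Type)
  (adm : forall j, I j -> Prop) (X : forall j, I j -> T -> R) : Prop :=
  forall (js : seq J), uniq js ->
  forall (F : forall j, seq (I j)) (B : forall j, I j -> set R),
  (forall j i, List.In i (F j) -> adm j i) ->
  (forall j i, measurable (B j i)) ->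
  let ev j := bigI (F j) (fun i => X j i @^-1` B j i) in
  P (bigI js ev) = (\prod_(j <- js) P (ev j))%E.

Definition std_BM1 (B : R -> T -> R) : Prop :=
  [/\ (forall t, 0 <= t -> measurable_fun setT (B t)),
      P [set w | B 0 w = 0] = 1%E,
      {ae P, forall w, {within [set t | 0 <= t], continuous (fun t => B t w)}},
      (forall (n : nat) (t : nat -> R), 0 <= t 0%N ->
         (forall l, (l < n)%N -> t l < t l.+1) ->
         indep_rvs (fun l : nat => (l < n)%N)
                   (fun l => B (t l.+1) \- B (t l)))
    & (forall s t, 0 <= s -> s < t -> forall A : set R, measurable A ->
         P ((B t \- B s) @^-1` A) = normal_prob 0 (Num.sqrt (t - s)) A)].

Definition std_BM {p : nat} (W : 'I_p -> R -> T -> R) : Prop :=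
  (forall c, std_BM1 (W c)) /\
  @indep_families 'I_p (fun _ => R) (fun _ t => 0 <= t) (fun c t => W c t).

Definition indep_std_BM {p : nat} (W1 W2 : 'I_p -> R -> T -> R) : Prop :=
  [/\ std_BM W1, std_BM W2 &
      @indep_families bool (fun _ => ('I_p * R)%type) (fun _ ct => 0 <= ct.2)
        (fun b ct => if b then W1 ct.1 ct.2 else W2 ct.1 ct.2)].

(* strict stationarity of (Y_i)_{i >= 1}: the finite-dimensional joint
   distributions (tested on measurable rectangles) are shift invariant *)
Definition stationary {p : nat} (Y : nat -> 'I_p -> T -> R) : Prop :=
  forall (s : seq (nat * 'I_p)) (B : nat * 'I_p -> set R) (h : nat),
  (forall x, measurable (B x)) -> (forall x, x \in s -> (1 <= x.1)%N) ->
  P (bigI s (fun x => Y x.1 x.2 @^-1` B x)) =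
  P (bigI s (fun x => Y (x.1 + h)%N x.2 @^-1` B x)).

Definition cov (X Z : T -> R) : R := fine (covariance P X Z).

(* Sigma = Cov(Y1,Y1) + sum_{i>=2} {Cov(Y1,Yi) + Cov(Yi,Y1)}, series converging *)
Definition long_run_cov {p : nat} (Y : nat -> 'I_p -> T -> R) (S : 'M[R]_p) : Prop :=
  forall a b : 'I_p,
  (fun n : nat => \sum_(2 <= i < n) (cov (Y 1%N a) (Y i b) + cov (Y i a) (Y 1%N b)))
    @ \oo --> S a b - cov (Y 1%N a) (Y 1%N b).

Definition meanv {p : nat} (Y : nat -> 'I_p -> T -> R) : 'cV[R]_p :=
  \col_c fine ('E_P[Y 1%N c])%E.

Definition OP1 (X : nat -> T -> \bar R) : Prop :=
  forall eps : R, 0 < eps -> exists M : R, exists m0 : nat, forall m : nat,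
  (m0 <= m)%N -> ((1 - eps)%:E <= P [set w | (X m w <= M%:E)%E])%E.

Definition oP1 (X : nat -> T -> \bar R) : Prop :=
  forall eps delta : R, 0 < eps -> 0 < delta -> exists m0 : nat, forall m : nat,
  (m0 <= m)%N -> ((1 - delta)%:E <= P [set w | (`|X m w| <= eps%:E)%E])%E.

End Prob.

Definition sup_after {R : realType} {T : Type} (m : nat) (f : nat -> T -> R) (w : T)
  : \bar R := ereal_sup [set (f k w)%:E | k in [set k : nat | (m < k)%N]].

Section Stats.
Context {R : realType} {T : Type} {p : nat}.

Definition Yv (Y : nat -> 'I_p -> T -> R) (i : nat) (w : T) : 'cV[R]_p :=
  colv (fun c => Y i c w).

Definition Wv (W : 'I_p -> R -> T -> R) (t : R) (w : T) : 'cV[R]_p :=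
  colv (fun c => W c t w).

Definition Ybar (Y : nat -> 'I_p -> T -> R) (j k : nat) (w : T) : 'cV[R]_p :=
  ((k - j + 1)%N%:R)^-1 *: \sum_(j <= i < k.+1) Yv Y i w.

Definition Dtilde (Y : nat -> 'I_p -> T -> R) (Sinv : 'M[R]_p) (m k : nat) (w : T) : R :=
  \big[Num.max/0]_(m <= j < k)
     ((j * (k - j))%N%:R / (m%:R `^ (3 / 2)) *
       Mnorm Sinv (Ybar Y 1 j w - Ybar Y j.+1 k w)).

Definition Dbar (Sh Sinv : 'M[R]_p) (W1m W2m : 'I_p -> R -> T -> R) (m k : nat)
  (w : T) : R :=
  (Num.sqrt m%:R)^-1 * \big[Num.max/0]_(m <= j < k)
     Mnorm Sinv ((k%:R / m%:R) *: (Sh *m (Wv W2m m%:R w + Wv W1m (j - m)%N%:R w))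
               - (j%:R / m%:R) *: (Sh *m (Wv W2m m%:R w + Wv W1m (k - m)%N%:R w))).

End Stats.

(* Write S_j = \sum_{i <= j} (Y_i - E Y_1) and G_j = Sigma^{1/2} (W_{2,m}(m) +
   W_{1,m}(j - m)) for its Gaussian approximation.  The identity
   j (k - j) (Ybar_{1:j} - Ybar_{j+1:k}) = k S_j - j S_k makes the j-th terms of
   D~_m(k) and D-_m(k) equal to m^{-3/2} ||k S_j - j S_k|| and
   m^{-3/2} ||k G_j - j G_k|| in the Sigma^{-1}-norm.  On the event where both
   strong approximations hold with constants M1, M2 (probability close to 1 for
   large m) and W_{1,m}(0) = 0 (almost sure), ||S_j - G_j||_2 <= (M1 + M2) k^xi
   for m <= j <= k, so by the triangle inequality of the Sigma^{-1}-norm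
   (Cauchy-Schwarz) the two maxima differ by at most C m^{-3/2} k^{1+xi}.  After
   the weight (m/k)^{3/2+eta} this is at most C m^{xi-1/2}, which vanishes since
   xi < 1/2. *)

From HB Require Import structures.
From mathcomp Require Import all_boot all_order all_algebra.
From mathcomp Require Import all_classical all_reals all_analysis.
From mathcomp Require Import ring lra.
Import Order.TTheory GRing.Theory Num.Theory.
Import numFieldTopology.Exports measurable_realfun.
Local Open Scope classical_set_scope.
Local Open Scope ring_scope.

Section QuadraticForm.
Context {R : realType} {p : nat}.
Implicit Types (M : 'M[R]_p) (u v w : 'cV[R]_p).

Definition qform M u v : R := (u^T *m M *m v) 0 0.

Definition psd M := M^T = M /\ forall v, 0 <= qform M v v.

Lemma qformC M u v : M^T = M -> qform M u v = qform M v u.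
Proof.
move=> MT; rewrite /qform.
have -> : (u^T *m M *m v) 0 0 = (u^T *m M *m v)^T 0 0 by rewrite [RHS]mxE.
by rewrite !trmx_mul MT trmxK mulmxA.
Qed.

Lemma qformDl M u v w : qform M (u + v) w = qform M u w + qform M v w.
Proof. by rewrite /qform linearD /= !mulmxDl mxE. Qed.

Lemma qformZl M a u w : qform M (a *: u) w = a * qform M u w.
Proof. by rewrite /qform linearZ /= -!scalemxAl mxE. Qed.

Lemma qformDr M u v w : qform M w (u + v) = qform M w u + qform M w v.
Proof. by rewrite /qform mulmxDr mxE. Qed.

Lemma qformZr M a u w : qform M w (a *: u) = a * qform M w u.
Proof. by rewrite /qform -scalemxAr mxE. Qed.

Lemma qform_CauchySchwarz M u v : psd M ->
  qform M u v ^+ 2 <= qform M u u * qform M v v.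
Proof.
move=> [MT M_ge0].
have quad s t : 0 <= s ^+ 2 * qform M u u + 2 * s * t * qform M u v
                     + t ^+ 2 * qform M v v.
  have := M_ge0 (s *: u + t *: v).
  rewrite !(qformDl, qformDr, qformZl, qformZr) (qformC M v u MT).
  by congr (0 <= _); ring.
have := M_ge0 u; have := M_ge0 v.
have [vv0 _ uu_ge0|vv_neq0 vv_ge0 uu_ge0] := eqVneq (qform M v v) 0.
  (* this [s, t] gives [0 <= - qform M u v ^+ 2 * (qform M u u + 2)] *)
  have := quad (qform M u v) (- (qform M u u + 1)).
  rewrite vv0 mulr0; nra.
have vv_gt0 : 0 < qform M v v by rewrite lt_def vv_neq0.
have := quad (qform M v v) (- qform M u v); nra.
Qed.

Definition qnorm M v := Num.sqrt (qform M v v).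

Lemma qnorm_ge0 M v : 0 <= qnorm M v.
Proof. exact: sqrtr_ge0. Qed.

Lemma qnormZ M a v : qnorm M (a *: v) = `|a| * qnorm M v.
Proof.
by rewrite /qnorm qformZl qformZr mulrA -expr2 sqrtrM ?sqr_ge0 // sqrtr_sqr.
Qed.

Lemma qnormN M v : qnorm M (- v) = qnorm M v.
Proof. by rewrite -scaleN1r qnormZ normrN normr1 mul1r. Qed.

Lemma qnormD M u v : psd M -> qnorm M (u + v) <= qnorm M u + qnorm M v.
Proof.
move=> Mpsd; have [MT M_ge0] := Mpsd.
have uv_le : qform M u v <= qnorm M u * qnorm M v.
  apply: le_trans (ler_norm _) _.
  by rewrite -sqrtr_sqr -sqrtrM ?M_ge0 // ler_wsqrtr // qform_CauchySchwarz.
rewrite -ler_sqr ?nnegrE ?addr_ge0 ?qnorm_ge0 //.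
rewrite /qnorm sqrrD !sqr_sqrtr ?M_ge0 // -/(qnorm M u) -/(qnorm M v).
by rewrite !(qformDl, qformDr) (qformC M v u MT); lra.
Qed.

Lemma qnorm_dist M u v : psd M -> `|qnorm M u - qnorm M v| <= qnorm M (u - v).
Proof.
move=> Mpsd; rewrite ler_norml; apply/andP; split.
  by have := qnormD M (v - u) u Mpsd; rewrite subrK -opprB qnormN; lra.
by have := qnormD M (u - v) v Mpsd; rewrite subrK; lra.
Qed.

Definition mx_abs_sum M : R := \sum_i \sum_j `|M i j|.

Lemma qnorm_le_norm2 M v : qnorm M v <= Num.sqrt (mx_abs_sum M) * norm2 v.
Proof.
rewrite /qnorm /norm2 -sqrtrM; last by do 2!apply: sumr_ge0 => ? _.
apply: ler_wsqrtr; rewrite /qform mxE /mx_abs_sum exchange_big mulr_suml.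
apply: ler_sum => j _; rewrite mxE !mulr_suml; apply: ler_sum => i _.
rewrite !mxE.
have vv_le k : v k 0 ^+ 2 <= \sum_l v l 0 ^+ 2.
  by rewrite (bigD1 k) //= lerDl sumr_ge0 // => l _; rewrite sqr_ge0.
have amgm : `|v i 0 * v j 0| <= \sum_l v l 0 ^+ 2.
  have := sqr_ge0 (`|v i 0| - `|v j 0|); have := vv_le i; have := vv_le j.
  rewrite normrM -!(real_normK (num_real (v _ 0))); nra.
apply: le_trans (ler_norm _) _; rewrite !normrM mulrAC -normrM mulrC.
by apply: ler_wpM2l.
Qed.

End QuadraticForm.

Section Mnorm.
Context {R : realType} {p : nat}.
Implicit Types (M : 'M[R]_p) (u v : 'cV[R]_p).

Lemma psdZ a M : 0 <= a -> psd M -> psd (a *: M).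
Proof.
move=> a_ge0 [MT M_ge0]; split; first by rewrite linearZ /= MT.
by move=> v; rewrite /qform -scalemxAr -scalemxAl mxE mulr_ge0 ?M_ge0.
Qed.

Lemma posdef_invmx_psd {M} : posdef M -> psd (invmx M).
Proof.
move=> [MT M_gt0].
have [M_unit|] := boolP (M \in unitmx); last first.
  move/invmx_out ->; split=> // v.
  by have [->|/M_gt0/ltW //] := eqVneq v 0; rewrite /qform mulmx0 mxE.
split; first by rewrite trmx_inv MT.
move=> v; have [->|v_neq0] := eqVneq v 0; first by rewrite /qform mulmx0 mxE.
have -> : qform (invmx M) v v = qform M (invmx M *m v) (invmx M *m v).
  by rewrite /qform trmx_mul trmx_inv MT !mulmxA mulmxKV.
apply: ltW; apply: M_gt0.
by apply: contra_neq v_neq0 => Mv0; rewrite -(mulKVmx M_unit v) Mv0 mulmx0.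
Qed.

Lemma Mnorm_qnorm M v : Mnorm M v = qnorm (p%:R^-1 *: M) v.
Proof.
by rewrite /Mnorm /qnorm /qform -scalemxAr -scalemxAl [in RHS]mxE mulrC.
Qed.

Lemma MnormZ M a v : Mnorm M (a *: v) = `|a| * Mnorm M v.
Proof. by rewrite !Mnorm_qnorm qnormZ. Qed.

Lemma MnormD M u v : psd M -> Mnorm M (u + v) <= Mnorm M u + Mnorm M v.
Proof.
by move=> Mpsd; rewrite !Mnorm_qnorm qnormD //; apply: psdZ Mpsd; rewrite invr_ge0.
Qed.

Lemma Mnorm_dist M u v : psd M -> `|Mnorm M u - Mnorm M v| <= Mnorm M (u - v).
Proof.
by move=> Mpsd; rewrite !Mnorm_qnorm qnorm_dist //; apply: psdZ Mpsd; rewrite invr_ge0.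
Qed.

Lemma Mnorm_le_norm2 M v :
  Mnorm M v <= Num.sqrt (mx_abs_sum (p%:R^-1 *: M)) * norm2 v.
Proof. by rewrite Mnorm_qnorm qnorm_le_norm2. Qed.

End Mnorm.

Section PartialSums.
Context {R : realType} {T : Type} {p : nat}.
Implicit Types (Y : nat -> 'I_p -> T -> R) (mu : 'cV[R]_p).

Definition centred_sum Y mu (a b : nat) (w : T) : 'cV[R]_p :=
  \sum_(a <= i < b.+1) (Yv Y i w - mu).

Lemma centred_sum_cat Y mu a b c w : (a <= b.+1 <= c.+1)%N ->
  centred_sum Y mu a c w = centred_sum Y mu a b w + centred_sum Y mu b.+1 c w.
Proof. by move=> /andP[ab bc]; rewrite /centred_sum (@big_cat_nat _ _ _ b.+1). Qed.

(* The centring [mu] is arbitrary: it cancels in the difference of means. *)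
Lemma scale_Ybar_sub Y mu j k w : (1 <= j < k)%N ->
  (j * (k - j))%N%:R *: (Ybar Y 1 j w - Ybar Y j.+1 k w) =
  k%:R *: centred_sum Y mu 1 j w - j%:R *: centred_sum Y mu 1 k w.
Proof.
move=> /andP[j_ge1 jk].
rewrite (@centred_sum_cat _ _ 1 j k) /=; last by rewrite ltnS ltnW.
rewrite /Ybar /centred_sum !sumrB !sumr_const_nat subnK // subn1 addn1 subnSK //=.
rewrite subSS.
set A := \sum_(1 <= i < j.+1) _; set B := \sum_(j.+1 <= i < k.+1) _.
have j_neq0 : (j%:R : R) != 0 by rewrite pnatr_eq0 -lt0n.
have kj_neq0 : ((k - j)%N%:R : R) != 0 by rewrite pnatr_eq0 -lt0n subn_gt0.
rewrite -[mu *+ j]scaler_nat -[mu *+ (k - j)]scaler_nat.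
rewrite natrM natrB ?(ltnW jk) // in kj_neq0 *.
apply/matrixP => a b; rewrite !mxE.
by field; rewrite kj_neq0 j_neq0.
Qed.

End PartialSums.

Lemma le_mul_of_invM_le {R : realFieldType} (a K n M : R) :
  0 < a -> a <= K -> 0 <= n -> a^-1 * n <= M -> n <= M * K.
Proof.
move=> a_gt0 aK n_ge0 nM.
have M_ge0 : 0 <= M by apply/(le_trans _ nM); rewrite mulr_ge0 // invr_ge0 ltW.
rewrite -(mulVKf (lt0r_neq0 a_gt0) n) mulrC.
by apply: ler_pM => //; [rewrite mulr_ge0 // invr_ge0 ltW | exact: ltW].
Qed.

Lemma rescaled_rate_le {R : realType} (m k xi eta Q : R) :
  1 <= m -> m <= k -> 0 < xi -> xi < 1 / 2 -> 0 < eta -> 0 <= Q ->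
  (m / k) `^ (3 / 2 + eta) * ((m `^ (3 / 2))^-1 * (2 * k * (Q * k `^ xi)))
   <= 2 * Q * (m `^ (1 / 2 - xi))^-1.
Proof.
move=> m_ge1 mk xi_gt0 xi_lt eta_gt0 Q_ge0.
have m_gt0 : 0 < m by lra.
have k_gt0 : 0 < k by lra.
have mk_gt0 : 0 < m / k by rewrite divr_gt0.
set b := 1 + xi.
have split_mk : (m / k) `^ (3 / 2 + eta) = (m / k) `^ (3 / 2 + eta - b) * (m / k) `^ b.
  by rewrite -powRD ?subrK // (gt_eqF mk_gt0) implybT.
have cancel_k : (m / k) `^ b * k `^ b = m `^ b.
  by rewrite -powRM ?ltW // mulrVK // unitfE gt_eqF.
have kb : k * k `^ xi = k `^ b.
  by rewrite /b powRD ?(gt_eqF k_gt0) ?implybT // powRr1 // ltW.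
have split_m : m `^ (3 / 2) = m `^ b * m `^ (1 / 2 - xi).
  by rewrite -powRD ?(gt_eqF m_gt0) ?implybT //; congr (_ `^ _); rewrite /b; field.
have u_le1 : (m / k) `^ (3 / 2 + eta - b) <= 1.
  have r_ge0 : 0 <= 3 / 2 + eta - b by rewrite /b; lra.
  have mk_le1 : m / k <= 1 by rewrite ler_pdivrMr // mul1r.
  by have := ge0_ler_powR r_ge0 (ltW mk_gt0) ler01 mk_le1; rewrite powR1.
have z_gt0 : 0 < m `^ (1 / 2 - xi) by rewrite powR_gt0.
have mb_gt0 : 0 < m `^ b by rewrite powR_gt0.
rewrite split_mk split_m.
set u := (m / k) `^ _; set z := m `^ (1 / 2 - xi).
rewrite (_ : _ * _ = u * (((m / k) `^ b * (k * k `^ xi)) * 2 * Q / (m `^ b * z)));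
  last by field; rewrite !gt_eqF.
rewrite kb cancel_k (_ : _ * _ = u * (2 * Q / z)); last by field; rewrite !gt_eqF.
by rewrite -[leRHS]mul1r ler_wpM2r // divr_ge0 ?mulr_ge0 // ltW.
Qed.

Lemma rate_eventually_le {R : realType} (s Q eps : R) :
  0 < s -> 0 < eps ->
  exists N : nat, forall m : nat, (N <= m)%N -> Q * (m%:R `^ s)^-1 <= eps.
Proof.
move=> s_gt0 eps_gt0; set t := (eps^-1 * `|Q|) `^ s^-1.
exists (Num.Def.trunc t).+1 => m Nm.
have t_le : t <= m%:R by apply/ltW/(lt_le_trans (truncnS_gt t)); rewrite ler_nat.
have m_gt0 : (0 : R) < m%:R by rewrite ltr0n (leq_trans _ Nm).
rewrite ler_pdivrMr ?powR_gt0 //; apply: le_trans (ler_norm Q) _.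
rewrite -ler_pdivrMl //.
have -> : eps^-1 * `|Q| = t `^ s.
  by rewrite -powRrM mulVf ?gt_eqF // powRr1 // mulr_ge0 // invr_ge0 ltW.
by apply: ge0_ler_powR; rewrite ?nnegrE ?powR_ge0 ?ler0n // ltW.
Qed.

Lemma bigmax_scaled_dist_le {R : realType} (F G : nat -> R) (s b : R) (m k : nat) :
  0 <= s -> 0 <= b -> (forall j, (m <= j < k)%N -> `|F j - s * G j| <= b) ->
  `|\big[Num.max/0]_(m <= j < k) F j - s * \big[Num.max/0]_(m <= j < k) G j| <= b.
Proof.
move=> s_ge0 b_ge0 FG_le; rewrite big_nat_cond [X in s * X]big_nat_cond.
apply: (big_ind2 (fun x y => `|x - s * y| <= b)).
- by rewrite mulr0 subr0 normr0.
- move=> x1 x2 y1 y2; rewrite maxr_pMr // !ler_norml => /andP[? ?] /andP[? ?].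
  by case: (leP x1 y1); case: (leP (s * x2) (s * y2)) => ? ?; apply/andP; lra.
- by move=> j /andP[/FG_le].
Qed.

Lemma powR_three_halves {R : realType} (x : R) : 0 <= x ->
  x `^ (3 / 2) = x * Num.sqrt x.
Proof.
move=> x_ge0; have -> : (3 / 2 : R) = 1 + 2^-1 by field.
have [->|x_neq0] := eqVneq x 0; first by rewrite powR0 ?mul0r // gt_eqF.
by rewrite powRD ?x_neq0 ?implybT // powRr1 // powR12_sqrt.
Qed.

Section ApproximationError.
Context {R : realType} {T : Type} {p : nat}.
Variables (Y : nat -> 'I_p -> T -> R) (mu : 'cV[R]_p) (Sh : 'M[R]_p).
Variables (W1m W2m : 'I_p -> R -> T -> R) (m : nat).

Definition approx_err_upto (w : T) : 'cV[R]_p :=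
  centred_sum Y mu 1 m w - Sh *m Wv W2m m%:R w.

Definition approx_err_after (k : nat) (w : T) : 'cV[R]_p :=
  centred_sum Y mu m.+1 k w - Sh *m Wv W1m (k - m)%N%:R w.

Definition bm_sum (j : nat) (w : T) : 'cV[R]_p :=
  Sh *m (Wv W2m m%:R w + Wv W1m (j - m)%N%:R w).

Lemma centred_sum_sub_bm_sum j w : (m <= j)%N ->
  centred_sum Y mu 1 j w - bm_sum j w = approx_err_upto w + approx_err_after j w.
Proof.
move=> mj; rewrite (@centred_sum_cat _ _ _ _ _ 1 m j) ?mj // /bm_sum mulmxDr.
by rewrite /approx_err_upto /approx_err_after opprD addrACA.
Qed.

Variables (Sinv : 'M[R]_p) (w : T).
Hypothesis Sinv_psd : psd Sinv.

Lemma Dtilde_term j k : (1 <= j < k)%N ->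
  (j * (k - j))%N%:R / (m%:R `^ (3 / 2)) *
    Mnorm Sinv (Ybar Y 1 j w - Ybar Y j.+1 k w)
  = (m%:R `^ (3 / 2))^-1 *
    Mnorm Sinv (k%:R *: centred_sum Y mu 1 j w - j%:R *: centred_sum Y mu 1 k w).
Proof.
move=> jk; rewrite -(scale_Ybar_sub _ mu) // MnormZ ger0_norm //.
by rewrite mulrA [_^-1 * _]mulrC.
Qed.

Lemma Dbar_term j k :
  (Num.sqrt m%:R)^-1 *
    Mnorm Sinv ((k%:R / m%:R) *: bm_sum j w - (j%:R / m%:R) *: bm_sum k w)
  = (m%:R `^ (3 / 2))^-1 * Mnorm Sinv (k%:R *: bm_sum j w - j%:R *: bm_sum k w).
Proof.
rewrite ![_ / m%:R]mulrC -!scalerA -scalerBr MnormZ ger0_norm ?invr_ge0 //.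
by rewrite powR_three_halves // invfM mulrA [_^-1 * _^-1]mulrC.
Qed.

Lemma Dtilde_Dbar_le k B1 B2 : (1 <= m < k)%N ->
  norm2 (approx_err_upto w) <= B2 ->
  (forall j, (m <= j <= k)%N -> norm2 (approx_err_after j w) <= B1) ->
  `|Dtilde Y Sinv m k w - Dbar Sh Sinv W1m W2m m k w|
    <= (m%:R `^ (3 / 2))^-1 *
       (2 * k%:R * (Num.sqrt (mx_abs_sum (p%:R^-1 *: Sinv)) * (B1 + B2))).
Proof.
move=> /andP[m_ge1 mk] E2_le E1_le.
set c := Num.sqrt _; have c_ge0 : 0 <= c := sqrtr_ge0 _.
have B2_ge0 : 0 <= B2 := le_trans (sqrtr_ge0 _) E2_le.
have B1_ge0 : 0 <= B1 by apply: le_trans (sqrtr_ge0 _) (E1_le m _); rewrite leqnn ltnW.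
have err_le j : (m <= j <= k)%N ->
    Mnorm Sinv (centred_sum Y mu 1 j w - bm_sum j w) <= c * (B1 + B2).
  move=> /andP[mj jk]; rewrite centred_sum_sub_bm_sum //.
  apply: le_trans (MnormD _ _ _ Sinv_psd) _; rewrite mulrDr addrC.
  apply: lerD; (apply: le_trans (Mnorm_le_norm2 _ _) _; apply: ler_wpM2l => //).
  by apply: E1_le; rewrite mj.
apply: bigmax_scaled_dist_le; rewrite ?invr_ge0 ?sqrtr_ge0 ?mulr_ge0 ?addr_ge0 //.
move=> j /andP[mj jk].
rewrite Dtilde_term ?(leq_trans m_ge1 mj) // [_ * Mnorm _ _](Dbar_term j k).
rewrite -mulrBr normrM ger0_norm ?invr_ge0 ?powR_ge0 //.
apply: ler_wpM2l; first by rewrite invr_ge0 powR_ge0.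
apply: le_trans (Mnorm_dist _ _ _ Sinv_psd) _.
rewrite (_ : _ - _ = k%:R *: (centred_sum Y mu 1 j w - bm_sum j w)
                   + (- j%:R) *: (centred_sum Y mu 1 k w - bm_sum k w)); last first.
  by apply/matrixP => a b; rewrite !mxE; ring.
apply: le_trans (MnormD _ _ _ Sinv_psd) _; rewrite !MnormZ normrN !ger0_norm //.
have ej : Mnorm Sinv (centred_sum Y mu 1 j w - bm_sum j w) <= c * (B1 + B2).
  by apply: err_le; rewrite mj ltnW.
have ek : Mnorm Sinv (centred_sum Y mu 1 k w - bm_sum k w) <= c * (B1 + B2).
  by apply: err_le; rewrite leqnn ltnW.
have jk' : (j%:R : R) <= k%:R by rewrite ler_nat ltnW.
have := ler0n R j; have := mulr_ge0 c_ge0 (addr_ge0 B1_ge0 B2_ge0); nra.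
Qed.

Lemma scaled_Dtilde_Dbar_le xi eta M1 M2 k :
  0 < xi < 1 / 2 -> 0 < eta -> (1 <= m < k)%N -> Wv W1m 0 w = 0 ->
  (m%:R `^ xi)^-1 * norm2 (approx_err_upto w) <= M2 ->
  (forall j, (m < j)%N ->
     ((j - m)%N%:R `^ xi)^-1 * norm2 (approx_err_after j w) <= M1) ->
  (m%:R / k%:R) `^ (3 / 2 + eta) *
    `|Dtilde Y Sinv m k w - Dbar Sh Sinv W1m W2m m k w|
  <= 2 * (Num.sqrt (mx_abs_sum (p%:R^-1 *: Sinv)) * (M1 + M2))
       * (m%:R `^ (1 / 2 - xi))^-1.
Proof.
move=> /andP[xi_gt0 xi_lt] eta_gt0 /andP[m_ge1 mk] W0 E2_le E1_le.
have m_gt0 : (0 : R) < m%:R by rewrite ltr0n.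
have mk_R : (m%:R : R) <= k%:R by rewrite ler_nat ltnW.
have pow_le_k x : 0 <= x <= k%:R -> x `^ xi <= k%:R `^ xi.
  by move=> /andP[x_ge0 xk]; apply: ge0_ler_powR; rewrite ?nnegrE ?ler0n // ltW.
have M1_ge0 : 0 <= M1.
  apply: le_trans (E1_le k mk); rewrite mulr_ge0 ?sqrtr_ge0 // invr_ge0 powR_ge0.
have M2_ge0 : 0 <= M2.
  by apply: le_trans E2_le; rewrite mulr_ge0 ?sqrtr_ge0 // invr_ge0 powR_ge0.
have E2_le' : norm2 (approx_err_upto w) <= M2 * k%:R `^ xi.
  by apply: le_mul_of_invM_le E2_le; rewrite ?sqrtr_ge0 ?powR_gt0 ?pow_le_k ?ler0n.
have E1_le' j : (m <= j <= k)%N -> norm2 (approx_err_after j w) <= M1 * k%:R `^ xi.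
  move=> /andP[mj jk]; have [<-|m_neq_j] := eqVneq m j.
    rewrite /approx_err_after subnn W0 mulmx0 subr0 /centred_sum big_geq //.
    by rewrite /norm2 big1 ?sqrtr0 ?mulr_ge0 ?powR_ge0 // => c _; rewrite mxE expr0n.
  have m_lt_j : (m < j)%N by rewrite ltn_neqAle m_neq_j.
  apply: le_mul_of_invM_le (E1_le j m_lt_j); rewrite ?sqrtr_ge0 //.
    by rewrite powR_gt0 // ltr0n subn_gt0.
  by rewrite pow_le_k // ler0n ler_nat (leq_trans (leq_subr _ _)).
have mk' : (1 <= m < k)%N by rewrite m_ge1 mk.
have := Dtilde_Dbar_le _ _ _ mk' E2_le' E1_le'.
rewrite -mulrDl [_ * (_ * k%:R `^ xi)]mulrA.
move=> /(ler_wpM2l (powR_ge0 (m%:R / k%:R) (3 / 2 + eta))) /le_trans; apply.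
by apply: rescaled_rate_le; rewrite ?ler1n ?mulr_ge0 ?addr_ge0 ?sqrtr_ge0.
Qed.

End ApproximationError.

Section MeasurableMatrix.
Context {R : realType} {d : measure_display} {T : measurableType d}.
Local Notation mfun f := (measurable_fun [set: T] (f : T -> R)).

Lemma measurable_big_mem (op : R -> R -> R) (x0 : R) (I : eqType) (r : seq I)
    (F : I -> T -> R) :
  (forall f g, mfun f -> mfun g -> mfun (fun w => op (f w) (g w))) ->
  (forall i, i \in r -> mfun (F i)) ->
  mfun (fun w => \big[op/x0]_(i <- r) F i w).
Proof.
move=> mop; elim: r => [|i r IH] mF.
  by under eq_fun do rewrite big_nil; exact: measurable_cst.
under eq_fun do rewrite big_cons.
apply: mop; first by apply: mF; rewrite mem_head.
by apply: IH => j jr; apply: mF; rewrite in_cons jr orbT.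
Qed.

Lemma measurableT_comp_continuous (h : R -> R) (f : T -> R) :
  continuous h -> mfun f -> mfun (fun w => h (f w)).
Proof.
move=> h_cont mf; apply: (measurableT_comp (f := h)) => //.
exact: continuous_measurable_fun.
Qed.

Lemma measurable_sqrt (f : T -> R) : mfun f -> mfun (fun w => Num.sqrt (f w)).
Proof. by apply: measurableT_comp_continuous; exact: sqrt_continuous. Qed.

Definition measurable_mx {a b : nat} (F : T -> 'M[R]_(a, b)) :=
  forall i j, mfun (fun w => F w i j).

Lemma measurable_mx_cst {a b} (C : 'M[R]_(a, b)) : measurable_mx (fun=> C).
Proof. by move=> i j; exact: measurable_cst. Qed.

Lemma measurable_mxD {a b} (F G : T -> 'M[R]_(a, b)) :
  measurable_mx F -> measurable_mx G -> measurable_mx (fun w => F w + G w).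
Proof.
by move=> mF mG i j; under eq_fun do rewrite mxE; exact: measurable_funD.
Qed.

Lemma measurable_mxB {a b} (F G : T -> 'M[R]_(a, b)) :
  measurable_mx F -> measurable_mx G -> measurable_mx (fun w => F w - G w).
Proof.
by move=> mF mG i j; under eq_fun do rewrite !mxE; exact: measurable_funB.
Qed.

Lemma measurable_mxZ {a b} (c : R) (F : T -> 'M[R]_(a, b)) :
  measurable_mx F -> measurable_mx (fun w => c *: F w).
Proof.
move=> mF i j; under eq_fun do rewrite mxE.
by apply: measurable_funM => //; exact: measurable_cst.
Qed.

Lemma measurable_mulmx {a b n} (C : 'M[R]_(a, b)) (F : T -> 'M[R]_(b, n)) :
  measurable_mx F -> measurable_mx (fun w => C *m F w).
Proof.
move=> mF i j; under eq_fun do rewrite mxE.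
apply: measurable_sum => l; apply: measurable_funM => //; exact: measurable_cst.
Qed.

Lemma measurable_mx_sum {a b} (I : eqType) (r : seq I) (F : I -> T -> 'M[R]_(a, b)) :
  (forall i, i \in r -> measurable_mx (F i)) ->
  measurable_mx (fun w => \sum_(i <- r) F i w).
Proof.
move=> mF i j; under eq_fun do rewrite summxE.
by apply: measurable_big_mem => [f g|l lr]; [exact: measurable_funD | exact: mF].
Qed.

Lemma measurable_colv {p} (f : 'I_p -> T -> R) :
  (forall c, mfun (f c)) -> measurable_mx (fun w => colv (fun c => f c w)).
Proof. by move=> mf i j; under eq_fun do rewrite mxE; exact: mf. Qed.

Lemma measurable_norm2 {p} (F : T -> 'cV[R]_p) :
  measurable_mx F -> mfun (fun w => norm2 (F w)).
Proof.
move=> mF; apply: measurable_sqrt; apply: measurable_sum => c.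
by under eq_fun do rewrite expr2; exact: measurable_funM.
Qed.

Lemma measurable_scaled_norm2 {p} (a : R) (F : T -> 'cV[R]_p) :
  measurable_mx F -> mfun (fun w => a * norm2 (F w)).
Proof.
by move=> mF; apply: measurable_funM; [exact: measurable_cst | exact: measurable_norm2].
Qed.

Lemma measurable_Mnorm {p} (M : 'M[R]_p) (F : T -> 'cV[R]_p) :
  measurable_mx F -> mfun (fun w => Mnorm M (F w)).
Proof.
move=> mF; apply: measurable_sqrt; apply: measurable_funM; last exact: measurable_cst.
under eq_fun do rewrite -mulmxA mxE.
apply: measurable_sum => l; apply: measurable_funM; last exact: measurable_mulmx.
by under eq_fun do rewrite mxE; exact: mF.
Qed.

End MeasurableMatrix.

Section MeasurableStatistics.
Context {R : realType} {d : measure_display} {T : measurableType d} {p : nat}.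
Variables (Y : nat -> 'I_p -> T -> R) (mu : 'cV[R]_p) (Sh Sinv : 'M[R]_p).
Variables (W1m W2m : 'I_p -> R -> T -> R).
Hypothesis mY : forall i c, (1 <= i)%N -> measurable_fun setT (Y i c).
Hypothesis mW1 : forall c t, 0 <= t -> measurable_fun setT (W1m c t).
Hypothesis mW2 : forall c t, 0 <= t -> measurable_fun setT (W2m c t).

Lemma measurable_Yv i : (1 <= i)%N -> measurable_mx (Yv Y i).
Proof. by move=> i_ge1; apply: measurable_colv => c; exact: mY. Qed.

Lemma measurable_Wv (W : 'I_p -> R -> T -> R) t :
  (forall c, measurable_fun setT (W c t)) -> measurable_mx (Wv W t).
Proof. exact: measurable_colv. Qed.

Lemma measurable_centred_sum a b : (1 <= a)%N -> measurable_mx (centred_sum Y mu a b).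
Proof.
move=> a_ge1; apply: measurable_mx_sum => i; rewrite mem_index_iota => /andP[ai _].
by apply: measurable_mxB; [exact/measurable_Yv/(leq_trans a_ge1) | exact: measurable_mx_cst].
Qed.

Lemma measurable_Ybar a b : (1 <= a)%N -> measurable_mx (Ybar Y a b).
Proof.
move=> a_ge1; apply: measurable_mxZ; apply: measurable_mx_sum => i.
by rewrite mem_index_iota => /andP[ai _]; exact/measurable_Yv/(leq_trans a_ge1).
Qed.

Lemma measurable_approx_err_upto m : measurable_mx (approx_err_upto Y mu Sh W2m m).
Proof.
apply: measurable_mxB; first exact: measurable_centred_sum.
by apply/measurable_mulmx/measurable_Wv => c; exact: mW2.
Qed.

Lemma measurable_approx_err_after m k :
  measurable_mx (approx_err_after Y mu Sh W1m m k).
Proof.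
apply: measurable_mxB; first exact: measurable_centred_sum.
by apply/measurable_mulmx/measurable_Wv => c; exact: mW1.
Qed.

Lemma measurable_Dtilde m k : measurable_fun setT (Dtilde Y Sinv m k).
Proof.
apply: measurable_big_mem => [f g|j _]; first exact: measurable_maxr.
apply: measurable_funM; first exact: measurable_cst.
by apply/measurable_Mnorm/measurable_mxB; exact: measurable_Ybar.
Qed.

Lemma measurable_Dbar m k : measurable_fun setT (Dbar Sh Sinv W1m W2m m k).
Proof.
apply: measurable_funM; first exact: measurable_cst.
apply: measurable_big_mem => [f g|j _]; first exact: measurable_maxr.
apply/measurable_Mnorm/measurable_mxB; apply/measurable_mxZ/measurable_mulmx;
  by apply: measurable_mxD; apply: measurable_Wv => c; [exact: mW2 | exact: mW1].
Qed.

Lemma measurable_scaled_gap (a : R) m k :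
  measurable_fun setT (fun w =>
    a * `|Dtilde Y Sinv m k w - Dbar Sh Sinv W1m W2m m k w|).
Proof.
apply: measurable_funM; first exact: measurable_cst.
apply: measurableT_comp_continuous; first by move=> x; exact: norm_continuous.
by apply: measurable_funB; [exact: measurable_Dtilde | exact: measurable_Dbar].
Qed.

End MeasurableStatistics.

Section SupAfter.
Context {R : realType} {T : Type}.
Implicit Types (f : nat -> T -> R) (m : nat) (w : T) (x : R).

Lemma sup_after_le m f w x :
  (sup_after m f w <= x%:E)%E <-> (forall k, (m < k)%N -> f k w <= x).
Proof.
split=> [f_le k mk|f_le].
  by rewrite -lee_fin; apply: le_trans f_le; apply: ereal_sup_ubound; exists k.
by apply: ub_ereal_sup => _ [k mk <-]; rewrite lee_fin f_le.
Qed.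

Lemma sup_after_ge0 m f w : (forall k, 0 <= f k w) -> (0 <= sup_after m f w)%E.
Proof.
move=> f_ge0; apply: le_trans (_ : (f m.+1 w)%:E <= _)%E; first by rewrite lee_fin.
by apply: ereal_sup_ubound; exists m.+1 => //=; rewrite ltnSn.
Qed.

End SupAfter.

Section Probability.
Context {R : realType} {d : measure_display} {T : measurableType d}.
Variable P : probability T R.

Lemma measurable_EFin_le (f : T -> R) (x : R) : measurable_fun setT f ->
  measurable [set w | ((f w)%:E <= x%:E)%E].
Proof.
move=> mf; under eq_set do rewrite lee_fin.
by rewrite -[X in measurable X]setTI; exact: measurable_fun_le mf (measurable_cst x).
Qed.

Lemma measurable_sup_after_le (f : nat -> T -> R) m x :
  (forall k, measurable_fun setT (f k)) ->
  measurable [set w | (sup_after m f w <= x%:E)%E].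
Proof.
move=> mf; rewrite (_ : [set w | _] = \bigcap_(k in [set k | (m < k)%N])
                                       [set w | ((f k w)%:E <= x%:E)%E]).
  by apply: bigcap_measurableType => k _; exact: measurable_EFin_le.
apply/seteqP; split=> w /=; first by move=> /sup_after_le w_le k /= /w_le.
by move=> w_le; apply/sup_after_le => k mk; rewrite -lee_fin; exact: w_le.
Qed.

Lemma measurable_abs_sup_after_le (f : nat -> T -> R) m x :
  (forall k w, 0 <= f k w) -> (forall k, measurable_fun setT (f k)) ->
  measurable [set w | (`|sup_after m f w| <= x%:E)%E].
Proof.
move=> f_ge0 mf; under eq_set do rewrite gee0_abs ?sup_after_ge0 //.
exact: measurable_sup_after_le.
Qed.

Lemma probability_setI_ge A B (a b : R) : measurable A -> measurable B ->
  ((1 - a)%:E <= P A)%E -> ((1 - b)%:E <= P B)%E ->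
  ((1 - (a + b))%:E <= P (A `&` B))%E.
Proof.
move=> mA mB PA PB.
have mU := measurableU _ _ mA mB; have mI := measurableI _ _ mA mB.
have PU := probability_le1 P mU.
have : P (A `|` B) = (P A + P B - P (A `&` B))%E.
  exact: measureUfinl mA mB (le_lt_trans (probability_le1 P mA) (ltry 1)).
have fineE X : measurable X -> P X = (fine (P X))%:E.
  by move=> mX; rewrite fineK // fin_num_measure.
move: PA PB PU; rewrite (fineE _ mA) (fineE _ mB) (fineE _ mU) (fineE _ mI).
rewrite -EFinD !lee_fin => PA PB PU PUE.
by have := EFin_inj PUE; lra.
Qed.

Lemma probability_forall_mem (I : eqType) (s : seq I) (A : I -> set T) :
  (forall i, measurable (A i)) -> (forall i, P (A i) = 1%E) ->
  measurable [set w | forall i, i \in s -> A i w] /\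
  P [set w | forall i, i \in s -> A i w] = 1%E.
Proof.
move=> mA PA; elim: s => [|i s [mAs PAs]].
  rewrite (_ : [set w | _] = setT) ?probability_setT //.
  by apply/seteqP; split=> w //= _ ?.
rewrite (_ : [set w | _] = A i `&` [set w | forall j, j \in s -> A j w]); last first.
  apply/seteqP; split=> w /=; last by move=> [Aiw Asw] j /predU1P[->|/Asw].
  by move=> Aw; split=> [|j js]; apply: Aw; rewrite inE ?eqxx ?js ?orbT.
have mI := measurableI _ _ (mA i) mAs.
split=> //; apply/eqP; rewrite eq_le probability_le1 //=.
have := probability_setI_ge _ _ 0 0 (mA i) mAs.
by rewrite PA PAs addr0 subr0; apply.
Qed.

Lemma std_BM_measurable {p} {W : 'I_p -> R -> T -> R} :
  std_BM P W -> forall c t, 0 <= t -> measurable_fun setT (W c t).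
Proof. by move=> [BM _] c t t_ge0; have [mW _ _ _ _] := BM c; exact: mW. Qed.

Lemma std_BM_start0 {p} {W : 'I_p -> R -> T -> R} : std_BM P W ->
  measurable [set w | Wv W 0 w = 0] /\ P [set w | Wv W 0 w = 0] = 1%E.
Proof.
move=> BM; have [BM1 _] := BM.
rewrite (_ : [set w | _] = [set w | forall c, c \in enum 'I_p -> W c 0 w = 0]).
  apply: probability_forall_mem => [c|c]; last by have [_ + _ _ _] := BM1 c.
  have := std_BM_measurable BM c 0 (lexx 0) measurableT _ (measurable_set1 0).
  by rewrite setTI.
apply/seteqP; split=> w /= W0.
  by move=> c _; have := congr1 (fun M : 'cV_p => M c 0) W0; rewrite !mxE.
by apply/matrixP => c j; rewrite !mxE W0 ?mem_enum.
Qed.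

Lemma oP1_of_OP1_bound (X A B : nat -> T -> \bar R) (Z : nat -> set T)
    (rate : R -> R -> nat -> R) :
  (forall m (e : R), measurable [set w | (`|X m w| <= e%:E)%E]) ->
  (forall m (M : R), measurable [set w | (A m w <= M%:E)%E]) ->
  (forall m (M : R), measurable [set w | (B m w <= M%:E)%E]) ->
  (forall m, measurable (Z m) /\ P (Z m) = 1%E) ->
  OP1 P A -> OP1 P B ->
  (forall M1 M2 e, 0 < e -> exists N, forall m, (N <= m)%N -> rate M1 M2 m <= e) ->
  (forall M1 M2 m w, (0 < m)%N -> Z m w ->
     (A m w <= M1%:E)%E -> (B m w <= M2%:E)%E -> (`|X m w| <= (rate M1 M2 m)%:E)%E) ->
  oP1 P X.
Proof.
move=> mX mA mB Z_as A_tight B_tight rate_small X_le e delta e_gt0 delta_gt0.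
have delta2_gt0 : 0 < delta / 2 by rewrite divr_gt0.
have [M1 [m1 PA]] := A_tight _ delta2_gt0; have [M2 [m2 PB]] := B_tight _ delta2_gt0.
have [N rate_le] := rate_small M1 M2 e e_gt0.
exists (maxn (maxn m1 m2) (maxn N 1)) => m.
rewrite !geq_max => /andP[/andP[m1m m2m] /andP[Nm m_gt0]].
have [mZ PZ] := Z_as m.
have mAB := measurableI _ _ (mA m M1) (mB m M2).
have PAB := probability_setI_ge _ _ _ _ (mA m M1) (mB m M2) (PA m m1m) (PB m m2m).
have PZ' : ((1 - 0)%:E <= P (Z m))%E by rewrite subr0 PZ.
have := probability_setI_ge _ _ _ _ mAB mZ PAB PZ'.
rewrite addr0 -splitr => /le_trans; apply.
apply: le_measure; [exact/mem_set/(measurableI _ _ mAB mZ) | exact/mem_set/mX |].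
move=> w [[Aw Bw] Zw]; apply: le_trans (X_le _ _ _ _ m_gt0 Zw Aw Bw) _.
by rewrite lee_fin rate_le.
Qed.

End Probability.

Theorem lemmaA1 (R : realType) (d : measure_display) (T : measurableType d)
  (P : probability T R) (p : nat) (Y : nat -> 'I_p -> T -> R)
  (W1 W2 : nat -> 'I_p -> R -> T -> R) (Sigma Sh : 'M[R]_p) (xi : R) :
  (forall i c, (1 <= i)%N -> measurable_fun setT (Y i c)) ->
  (forall i c, (1 <= i)%N -> P.-integrable setT (fun w => (Y i c w)%:E)) ->
  (forall i c, (1 <= i)%N -> P.-integrable setT (fun w => (Y i c w ^+ 2)%:E)) ->
  stationary P Y ->
  (forall m : nat, indep_std_BM P (W1 m) (W2 m)) ->
  long_run_cov P Y Sigma ->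
  posdef Sigma ->
  is_sqrt_pd Sigma Sh ->
  0 < xi < 1 / 2 ->
  OP1 P (fun m => sup_after m (fun k w =>
     ((k - m)%N%:R `^ xi)^-1 *
     norm2 (\sum_(m.+1 <= i < k.+1) (Yv Y i w - meanv P Y)
            - Sh *m Wv (W1 m) (k - m)%N%:R w))) ->
  OP1 P (fun m w => ((m%:R `^ xi)^-1 *
     norm2 (\sum_(1 <= i < m.+1) (Yv Y i w - meanv P Y)
            - Sh *m Wv (W2 m) m%:R w))%:E) ->
  forall eta : R, 0 < eta ->
  oP1 P (fun m => sup_after m (fun k w =>
     (m%:R / k%:R) `^ (3 / 2 + eta) *
     `|Dtilde Y (invmx Sigma) m k w - Dbar Sh (invmx Sigma) (W1 m) (W2 m) m k w|)).
Proof.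
move=> mY _ _ _ BM _ Sigma_pd _ /andP[xi_gt0 xi_lt] OP_after OP_upto eta eta_gt0.
have Sinv_psd := posdef_invmx_psd Sigma_pd.
have mW m : (forall c t, 0 <= t -> measurable_fun setT (W1 m c t)) /\
            (forall c t, 0 <= t -> measurable_fun setT (W2 m c t)).
  by have [/std_BM_measurable mW1 /std_BM_measurable mW2 _] := BM m.
set c := Num.sqrt (mx_abs_sum (p%:R^-1 *: invmx Sigma)).
apply: (@oP1_of_OP1_bound _ _ _ P _ _ _ (fun m => [set w | Wv (W1 m) 0 w = 0])
  (fun M1 M2 m => 2 * (c * (M1 + M2)) * (m%:R `^ (1 / 2 - xi))^-1)
  _ _ _ _ OP_after OP_upto).
- move=> m e; have [mW1 mW2] := mW m.
  apply: measurable_abs_sup_after_le => [k w|k]; last exact: measurable_scaled_gap.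
  by rewrite mulr_ge0 ?powR_ge0.
- move=> m M; apply: measurable_sup_after_le => k.
  by apply/measurable_scaled_norm2/measurable_approx_err_after; [exact: mY | exact: (mW m).1].
- move=> m M; apply/measurable_EFin_le/measurable_scaled_norm2.
  by apply: measurable_approx_err_upto; [exact: mY | exact: (mW m).2].
- by move=> m; apply: std_BM_start0; case: (BM m).
- by move=> M1 M2 e e_gt0; apply: rate_eventually_le; rewrite // subr_gt0.
move=> M1 M2 m w m_gt0 W0 /sup_after_le E1_le; rewrite lee_fin => E2_le.
rewrite gee0_abs; last by apply: sup_after_ge0 => k; rewrite mulr_ge0 ?powR_ge0.
apply/sup_after_le => k mk.
by apply: (@scaled_Dtilde_Dbar_le _ _ _ _ (meanv P Y)); rewrite ?xi_gt0 ?m_gt0.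
Qed.
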